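(* Let $(A,m)$ be a curved $A_\infty$-algebra over a field $\mathbf{F}$ and $m=\sum_{k\ge0}m_k\in\prod_kC^{k,2-k}(A,A)$. Then $m=[m,\mathbf{I}-\mathbf{E}]$; in particular $[m]=0\in\mathrm{HH}^2(A,A)$.
   Context: A curved $A_\infty$-algebra $(A,m)$ over $\mathbf{F}$ is a $\mathbf{Z}$-graded vector space $A=\bigoplus_kA^k$ with graded linear maps $m_n:A^{\otimes n}\to A$ for $n\ge0$ (with $m_0$ identified with $m_0(\mathbf{1})\in A^2$) of degree $2-n$, with $m_k=0$ for $k\gg1$, satisfying for every $n\ge0$: $\sum_{n=r+s+t}(-1)^{\delta(x_1,\dots,x_r)}m_{r+1+t}(x_1,\dots,x_r,m_s(x_{r+1},\dots,x_{r+s}),x_{r+s+1},\dots,x_n)=0$ ($r,t,s\ge0$), where $\delta(x_1,\dots,x_r)=\sum_{i=1}^r(|x_i|-1)$. Let $C^{n,k}(A,A)=\mathrm{Hom}^k(A^{\otimes n},A)=\prod_i\mathrm{Hom}((A^{\otimes n})^i,A^{i+k})$ for $n\ge0$ (with $A^{\otimes0}=\mathbf{F}$, so $C^{0,k}\cong A^k$). For $f\in C^{n,k}$, $g\in C^{m,l}$ the Gerstenhaber bracket is $[f,g]=\sum_{i=0}^{n-1}(-1)^{\delta_1}f(\mathbf{I}^{\otimes i}\otimes g\otimes\mathbf{I}^{\otimes n-i-1})-(-1)^{(n+k-1)(m+l-1)}\sum_{i=0}^{m-1}(-1)^{\delta_2}g(\mathbf{I}^{\otimes i}\otimes f\otimes\mathbf{I}^{\otimes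 m-i-1})$, with $\delta_1=(n-1)(m-1)+(n-1)l+i(m-1)$, $\delta_2=(m-1)(n-1)+(m-1)k+i(n-1)$, empty sums $=0$, tensor products of maps evaluated with the Koszul sign rule, extended bilinearly. $D=[m,-]$ and $\mathrm{HH}^*(A,A)=H^*(\prod_iC^{i,*-i}(A,A),D)$. $\mathbf{I}\in C^{1,0}$ is the identity, and the euler derivation element $\mathbf{E}\in C^{1,0}$ is $\mathbf{E}(\alpha)=\deg(\alpha)\,\alpha$ for homogeneous $\alpha$. *)

From HB Require Import structures.
From mathcomp Require Import all_boot all_order all_algebra.
Set Implicit Arguments. Unset Strict Implicit. Unset Printing Implicit Defensive.
Import Order.TTheory GRing.Theory Num.Theory.
Local Open Scope ring_scope.

(* A Z-graded F-vector space A = (+)_k A^k, presented by the family of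
   projections gcomp k : A -> A^k of the direct sum decomposition: they are
   linear, mutually orthogonal idempotents, and every x is the (finite) sum of
   its homogeneous components, indexed by the duplicate-free list gsupp x. *)
Record graded (F : fieldType) (A : lmodType F) := Graded {
  gcomp : int -> A -> A;
  gcomp_linear : forall d, linear (gcomp d);
  gcomp_orth : forall d e x, gcomp d (gcomp e x) = if d == e then gcomp e x else 0;
  gsupp : A -> seq int;
  gsupp_uniq : forall x, uniq (gsupp x);
  gsupp_sum : forall x, x = \sum_(d <- gsupp x) gcomp d x }.

Section Hochschild.
Variables (F : fieldType) (A : lmodType F) (G : graded A).

Definition homog (d : int) (x : A) : Prop := gcomp G d x = x.

Definition sgn (z : int) : F := (-1) ^+ `|z|%N.

Definition ktwist (l : int) (x : A) : A :=
  \sum_(d <- gsupp G x) sgn (l * d) *: gcomp G d x.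

Definition euler (x : A) : A := \sum_(d <- gsupp G x) d%:~R *: gcomp G d x.

(* An n-ary cochain is a function on lists of n inputs (values on lists of
   other lengths are irrelevant). *)
Definition cochain := seq A -> A.

(* f \in C^{n,k}(A,A) = Hom^k(A^{(x) n}, A): n-multilinear, of degree k. *)
Definition is_cochain (n : nat) (k : int) (f : cochain) : Prop :=
  (forall (xs : seq A) (i : nat) (a : F) (y z : A), size xs = n -> (i < n)%N ->
      f (set_nth 0 xs i (a *: y + z))
      = a *: f (set_nth 0 xs i y) + f (set_nth 0 xs i z)) /\
  (forall (xs : seq A) (ds : seq int), size xs = n -> size ds = n ->
      (forall j, (j < n)%N -> homog (nth 0 ds j) (nth 0 xs j)) ->
      homog (\sum_(d <- ds) d + k) (f xs)).

(* f (I^{(x) i} (x) g (x) I^{(x) ...}) evaluated with the Koszul sign rule,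
   where g has arity m and degree l: the sign (-1)^(l(|x_1|+...+|x_i|)) is
   realised by twisting the first i inputs. *)
Definition ins (f : cochain) (i m : nat) (l : int) (g : cochain) : cochain :=
  fun xs => f (map (ktwist l) (take i xs) ++ g (take m (drop i xs)) :: drop (i + m) xs).

Definition gbracket (n : nat) (k : int) (f : cochain) (m : nat) (l : int)
    (g : cochain) : cochain :=
  fun xs =>
    \sum_(i < n) sgn ((n%:Z - 1) * (m%:Z - 1) + (n%:Z - 1) * l + (i%:Z) * (m%:Z - 1))
                   *: ins f i m l g xs
    - sgn ((n%:Z + k - 1) * (m%:Z + l - 1)) *:
      \sum_(i < m) sgn ((m%:Z - 1) * (n%:Z - 1) + (m%:Z - 1) * k + (i%:Z) * (n%:Z - 1))
                   *: ins g i n k f xs.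

(* Bilinear extension of the bracket to elements of prod_i C^{i,*-i} of total
   degrees p and q (the arity-n component of Fm lies in C^{n,p-n}).  The arity-r
   component of the bracket collects the brackets of components of arities
   n, m with n + m - 1 = r. *)
Definition tbracket (p q : int) (Fm Gm : nat -> cochain) : nat -> cochain :=
  fun r xs => \sum_(j < r.+2)
    gbracket j (p - j%:Z) (Fm j) (r.+1 - j) (q - (r.+1 - j)%N%:Z) (Gm (r.+1 - j)%N) xs.

Definition I_minus_E : nat -> cochain :=
  fun n xs => if n == 1%N then nth 0 xs 0 - euler (nth 0 xs 0) else 0.

Definition curved_Ainf (m : nat -> cochain) : Prop :=
  (forall n, is_cochain n (2 - n%:Z) (m n)) /\
  (exists N : nat, forall n xs, (N < n)%N -> size xs = n -> m n xs = 0) /\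
  (forall (n : nat) (xs : seq A) (ds : seq int), size xs = n -> size ds = n ->
     (forall j, (j < n)%N -> homog (nth 0 ds j) (nth 0 xs j)) ->
     \sum_(r < n.+1) \sum_(s < (n - r).+1)
        sgn (\sum_(d <- take r ds) (d - 1)) *:
          m (r + 1 + (n - r - s))%N
            (take r xs ++ m s (take s (drop r xs)) :: drop (r + s) xs) = 0).

End Hochschild.

(* The Euler derivation satisfies E (f xs) = k f xs + sum_i f (.., E x_i, ..)
   for every cochain f of internal degree k: both sides are multilinear, and on
   homogeneous inputs of degrees d_i they are (sum_i d_i + k) f xs.  Since
   I - E is a unary cochain of degree 0, the arity-r component of [m, I - E] is
   sum_i m_r (.., (I - E) x_i, ..) - (I - E) (m_r xs)
     = r m_r - sum_i m_r (.., E x_i, ..) - m_r + E (m_r xs),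
   which the identity above, applied to m_r of degree 2 - r, reduces to m_r. *)

From HB Require Import structures.
From mathcomp Require Import all_boot all_order all_algebra.
From mathcomp Require Import ring zify.
Import Order.TTheory GRing.Theory Num.Theory.
Local Open Scope ring_scope.
Set Implicit Arguments. Unset Strict Implicit.

Lemma set_nth_nth (T : Type) (x0 : T) (s : seq T) i :
  (i < size s)%N -> set_nth x0 s i (nth x0 s i) = s.
Proof.
move=> lt_is; apply: (@eq_from_nth _ x0) => [|j _].
  by rewrite size_set_nth (maxn_idPr lt_is).
by rewrite nth_set_nth /=; case: eqP => // ->.
Qed.

Lemma big_seq_pred1 (V : nmodType) (T : eqType) (S : seq T) e (v : T -> V) :
  uniq S -> e \in S -> \sum_(x <- S) (if x == e then v x else 0) = v e.
Proof.
by move=> uS eS; rewrite -big_mkcond -big_filter filter_pred1_uniq // big_seq1.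
Qed.

Section GradedSpace.
Variables (F : fieldType) (A : lmodType F) (G : graded A).

Definition gcomp_lin d : {linear A -> A} :=
  HB.pack (gcomp G d) (GRing.isLinear.Build F A A *:%R (gcomp G d) (gcomp_linear G d)).

Lemma gcomp_sum d (I : Type) (s : seq I) (v : I -> A) :
  gcomp G d (\sum_(i <- s) v i) = \sum_(i <- s) gcomp G d (v i).
Proof. exact: (raddf_sum (gcomp_lin d) s xpredT v). Qed.

Lemma euler_over S x : uniq S -> {subset gsupp G x <= S} ->
  euler G x = \sum_(d <- S) d%:~R *: gcomp G d x.
Proof.
move=> uS sub; rewrite /euler.
have gcompE d : gcomp G d x
    = \sum_(e <- gsupp G x) (if d == e then gcomp G e x else 0).
  rewrite {1}(gsupp_sum G x) gcomp_sum; apply: eq_bigr => e _.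
  by rewrite gcomp_orth.
under [RHS]eq_bigr => d _ do rewrite gcompE scaler_sumr.
rewrite exchange_big /= big_seq [RHS]big_seq; apply: eq_bigr => e eS.
under eq_bigr => d _ do rewrite (fun_if (GRing.scale d%:~R)) scaler0.
by rewrite (big_seq_pred1 (fun d => d%:~R *: gcomp G e x)) // sub.
Qed.

Lemma euler_linear : linear (euler G).
Proof.
move=> a u v.
set S := undup (gsupp G u ++ gsupp G v ++ gsupp G (a *: u + v)).
have eulerS w : {subset gsupp G w <= gsupp G u ++ gsupp G v ++ gsupp G (a *: u + v)} ->
    euler G w = \sum_(d <- S) d%:~R *: gcomp G d w.
  by move=> sub; apply: euler_over; rewrite ?undup_uniq // => y /sub; rewrite mem_undup.
rewrite !eulerS; try by move=> y yw; rewrite !mem_cat yw ?orbT.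
rewrite scaler_sumr -big_split; apply: eq_bigr => d _.
by rewrite gcomp_linear scalerDr !scalerA mulrC.
Qed.

Lemma euler_homog d x : homog G d x -> euler G x = d%:~R *: x.
Proof.
rewrite /homog => xd.
rewrite (@euler_over (undup (d :: gsupp G x))) ?undup_uniq //; last first.
  by move=> e ex; rewrite mem_undup in_cons ex orbT.
rewrite -(@big_seq_pred1 _ _ (undup (d :: gsupp G x)) d (fun e => e%:~R *: x))
  ?undup_uniq ?mem_undup ?mem_head //.
apply: eq_bigr => e _; rewrite -{1}xd gcomp_orth xd.
by case: eqP => // _; rewrite scaler0.
Qed.

Lemma ktwist0 x : ktwist G 0 x = x.
Proof.
rewrite /ktwist [RHS](gsupp_sum G x); apply: eq_bigr => d _.
by rewrite mul0r /sgn expr0 scale1r.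
Qed.

End GradedSpace.

Section Multilinear.
Variables (F : fieldType) (A : lmodType F).

Definition multilinear (n : nat) (f : cochain A) : Prop :=
  forall (xs : seq A) (i : nat) (a : F) (y z : A), size xs = n -> (i < n)%N ->
    f (set_nth 0 xs i (a *: y + z))
    = a *: f (set_nth 0 xs i y) + f (set_nth 0 xs i z).

Lemma cochain_multilinear (G : graded A) n k f : is_cochain G n k f -> multilinear n f.
Proof. by case. Qed.

Section Slot.
Variables (n : nat) (f : cochain A) (xs : seq A) (i : nat).
Hypotheses (f_ml : multilinear n f) (size_xs : size xs = n) (lt_i : (i < n)%N).

Definition slot_lin : {linear A -> A} :=
  HB.pack (fun y => f (set_nth 0 xs i y))
    (GRing.isLinear.Build F A A *:%R (fun y => f (set_nth 0 xs i y))
       (fun a y z => f_ml a y z size_xs lt_i)).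

Lemma multilinear_slot0 : f (set_nth 0 xs i 0) = 0.
Proof. exact: raddf0 slot_lin. Qed.

Lemma multilinear_slotZ a y : f (set_nth 0 xs i (a *: y)) = a *: f (set_nth 0 xs i y).
Proof. by have := f_ml a y 0 size_xs lt_i; rewrite !addr0 multilinear_slot0 addr0. Qed.

Lemma multilinear_slotB y :
  f (set_nth 0 xs i (nth 0 xs i - y)) = f xs - f (set_nth 0 xs i y).
Proof.
have -> : f xs = slot_lin (nth 0 xs i) by rewrite /= set_nth_nth ?size_xs.
exact: raddfB slot_lin (nth 0 xs i) y.
Qed.

Lemma multilinear_slot_sum (I : Type) (s : seq I) (v : I -> A) :
  f (set_nth 0 xs i (\sum_(e <- s) v e)) = \sum_(e <- s) f (set_nth 0 xs i (v e)).
Proof. exact: (raddf_sum slot_lin s xpredT v). Qed.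

Lemma multilinear_nth0 : nth 0 xs i = 0 -> f xs = 0.
Proof.
move=> xi0; have <- : set_nth 0 xs i (nth 0 xs i) = xs by rewrite set_nth_nth ?size_xs.
by rewrite xi0 multilinear_slot0.
Qed.

End Slot.

Section Closure.
Variable n : nat.

Lemma multilinearD f g : multilinear n f -> multilinear n g ->
  multilinear n (fun xs => f xs + g xs).
Proof.
move=> fml gml xs i a y z sx lt; rewrite fml // gml //.
by rewrite scalerDr addrACA.
Qed.

Lemma multilinearN f : multilinear n f -> multilinear n (fun xs => - f xs).
Proof. by move=> fml xs i a y z sx lt; rewrite fml // opprD scalerN. Qed.

Lemma multilinearZ c f : multilinear n f -> multilinear n (fun xs => c *: f xs).
Proof. by move=> fml xs i a y z sx lt; rewrite fml // scalerDr !scalerA mulrC. Qed.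

Lemma multilinear_sum (I : Type) (s : seq I) (fs : I -> cochain A) :
  (forall e, multilinear n (fs e)) ->
  multilinear n (fun xs => \sum_(e <- s) fs e xs).
Proof.
move=> fsml; elim: s => [|e s IH] xs i a y z sx lt.
  by rewrite !big_nil scaler0 addr0.
by rewrite !big_cons (multilinearD (fsml e) IH).
Qed.

Lemma multilinear_comp (h : A -> A) f : linear h -> multilinear n f ->
  multilinear n (h \o f).
Proof. by move=> hlin fml xs i a y z sx lt; rewrite /= fml // hlin. Qed.

Lemma multilinear_slot_map (h : A -> A) f j : linear h -> multilinear n f ->
  (j < n)%N -> multilinear n (fun xs => f (set_nth 0 xs j (h (nth 0 xs j)))).
Proof.
move=> hlin fml lt_j xs i a y z sx lt_i.
have sxj w : size (set_nth 0 xs j w) = n by rewrite size_set_nth sx (maxn_idPr lt_j).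
rewrite !nth_set_nth /=; have [-> | ne_ij] := eqVneq i j.
  have same w v : set_nth 0 (set_nth 0 xs j w) j v = set_nth 0 xs j v.
    by rewrite set_set_nth eqxx.
  by rewrite !same hlin fml.
have swap w v : set_nth 0 (set_nth 0 xs i w) j v = set_nth 0 (set_nth 0 xs j v) i w.
  by rewrite set_set_nth (negbTE ne_ij).
by rewrite !swap fml.
Qed.

End Closure.

(* Decompose the inputs into homogeneous components one slot at a time. *)
Lemma multilinear_homog_eq0 (G : graded A) n f : multilinear n f ->
  (forall xs ds, size xs = n -> size ds = n ->
     (forall j, (j < n)%N -> homog G (nth 0 ds j) (nth 0 xs j)) -> f xs = 0) ->
  forall xs, size xs = n -> f xs = 0.
Proof.
move=> fml f_homog xs sx.
suff hom_from k : (k <= n)%N -> forall ys ds, size ys = n -> size ds = n ->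
    (forall j, (k <= j < n)%N -> homog G (nth 0 ds j) (nth 0 ys j)) -> f ys = 0.
  apply: (hom_from n (leqnn n) xs (nseq n 0)); rewrite ?size_nseq // => j.
  by rewrite ltnNge andbN.
elim: k => [_|k IH lt_kn] ys ds sy sd hom.
  by apply: (f_homog _ ds) => // j lt_jn; apply: hom.
have sz (T : Type) (s : seq T) x0 w : size s = n -> size (set_nth x0 s k w) = n.
  by move=> ss; rewrite size_set_nth ss (maxn_idPr lt_kn).
rewrite -(@set_nth_nth _ 0 ys k) ?sy // [nth 0 ys k](gsupp_sum G).
rewrite (multilinear_slot_sum fml sy lt_kn); apply: big1 => d _.
apply: (IH (ltnW lt_kn) _ (set_nth 0 ds k d)); rewrite ?sz // => j /andP[le_kj lt_jn].
rewrite !nth_set_nth /=; have [_ | ne_jk] := eqVneq j k.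
  by rewrite /homog gcomp_orth eqxx.
by apply: hom; rewrite lt_jn andbT ltn_neqAle eq_sym ne_jk.
Qed.

End Multilinear.

Section EulerDerivation.
Variables (F : fieldType) (A : lmodType F) (G : graded A).
Variables (n : nat) (k : int) (f : cochain A).
Hypothesis f_cochain : is_cochain G n k f.

Definition euler_defect (xs : seq A) : A :=
  euler G (f xs)
  - (k%:~R *: f xs + \sum_(i < n) f (set_nth 0 xs i (euler G (nth 0 xs i)))).

Lemma euler_defect_multilinear : multilinear n euler_defect.
Proof.
have fml := cochain_multilinear f_cochain.
apply: multilinearD; first exact: multilinear_comp (@euler_linear _ _ G) fml.
apply/multilinearN/multilinearD; first exact: multilinearZ.
apply: (@multilinear_sum _ _ n _ (index_enum 'I_n) (fun i xs =>
          f (set_nth 0 xs i (euler G (nth 0 xs i))))) => i.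
exact: multilinear_slot_map (@euler_linear _ _ G) fml (ltn_ord i).
Qed.

Lemma euler_defect_homog xs ds : size xs = n -> size ds = n ->
  (forall j, (j < n)%N -> homog G (nth 0 ds j) (nth 0 xs j)) -> euler_defect xs = 0.
Proof.
move=> sx sd hom; have fml := cochain_multilinear f_cochain.
have slotE (i : 'I_n) : f (set_nth 0 xs i (euler G (nth 0 xs i)))
    = (nth 0 ds i)%:~R *: f xs.
  rewrite (euler_homog (hom i (ltn_ord i))) (multilinear_slotZ fml sx (ltn_ord i)).
  by rewrite set_nth_nth ?sx.
have sum_ds : \sum_(i < n) (nth 0 ds i)%:~R = (\sum_(d <- ds) d)%:~R :> F.
  by rewrite (big_nth 0) sd big_mkord rmorph_sum.
rewrite /euler_defect (euler_homog (f_cochain.2 xs ds sx sd hom)).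
rewrite (eq_bigr _ (fun i _ => slotE i)) -scaler_suml sum_ds -scalerDl.
by rewrite intrD [_ + k%:~R]addrC subrr.
Qed.

Lemma euler_cochain xs : size xs = n ->
  euler G (f xs) = k%:~R *: f xs + \sum_(i < n) f (set_nth 0 xs i (euler G (nth 0 xs i))).
Proof.
move=> sx; apply/eqP; rewrite -subr_eq0; apply/eqP.
exact: multilinear_homog_eq0 euler_defect_multilinear euler_defect_homog xs sx.
Qed.

End EulerDerivation.

Section Bracket.
Variables (F : fieldType) (A : lmodType F) (G : graded A).

Lemma sgn0 : sgn F 0 = 1.
Proof. exact: expr0. Qed.

(* For a unary cochain [g] of degree 0 every Koszul sign is trivial. *)
Lemma gbracket_unary_deg0 n k f g xs : size xs = n ->
  gbracket G n k f 1 0 g xs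
  = \sum_(i < n) f (set_nth 0 xs i (g [:: nth 0 xs i])) - g [:: f xs].
Proof.
move=> sx; rewrite /gbracket big_ord1 /ins /= !subrr !(mulr0, mul0r, addr0).
rewrite sgn0 !scale1r take0 drop0 take_oversize ?drop_oversize ?sx //.
congr (_ - _); apply: eq_bigr => i _; rewrite mulr0 addr0 sgn0 scale1r.
rewrite map_id_in => [|y _]; last exact: ktwist0.
by rewrite (drop_nth 0) ?sx // addn1 set_nthE sx ltn_ord /= take0.
Qed.

Lemma gbracket_I_minus_E_neq1 n k f q l xs : multilinear n f ->
  size xs = (n + q).-1 -> q != 1%N ->
  gbracket G n k f q l (I_minus_E G q) xs = 0.
Proof.
move=> fml sx q_neq1.
have IE0 ys : I_minus_E G q ys = 0 by rewrite /I_minus_E (negbTE q_neq1).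
rewrite /gbracket [X in _ - _ *: X]big1 => [|i _]; last by rewrite /ins IE0 scaler0.
rewrite scaler0 subr0 big1 // => i _; have lt_in := ltn_ord i.
rewrite /ins IE0 (multilinear_nth0 fml _ lt_in) ?scaler0 //.
  by rewrite size_cat size_map size_takel /= ?size_drop sx; lia.
by rewrite nth_cat size_map size_takel ?ltnn ?subnn //; lia.
Qed.

Lemma tbracket_I_minus_E p (Fm : nat -> cochain A) r xs :
  (forall j, multilinear j (Fm j)) -> size xs = r ->
  tbracket G p 1 Fm (I_minus_E G) r xs
  = \sum_(i < r) Fm r (set_nth 0 xs i (nth 0 xs i - euler G (nth 0 xs i)))
    - (Fm r xs - euler G (Fm r xs)).
Proof.
move=> Fml sx; rewrite /tbracket (bigD1 (Ordinal (leqW (ltnSn r)))) //=.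
rewrite big1 => [|j ne_jr]; last first.
  have {}ne_jr : (j : nat) != r by apply: contra ne_jr => /eqP jr; apply/eqP/val_inj.
  have le_jr := ltn_ord j; apply: gbracket_I_minus_E_neq1; rewrite ?sx //.
    by lia.
  by move/eqP: ne_jr; lia.
by rewrite addr0 subSnn subrr gbracket_unary_deg0.
Qed.

End Bracket.

Theorem theorem3p4 (F : fieldType) (A : lmodType F) (G : graded A)
    (m : nat -> cochain A) :
  curved_Ainf G m ->
  forall (r : nat) (xs : seq A), size xs = r ->
    m r xs = tbracket G 2 1 m (I_minus_E G) r xs.
Proof.
move=> [m_cochain _] r xs sx.
have m_ml j : multilinear j (m j) := cochain_multilinear (m_cochain j).
rewrite tbracket_I_minus_E // (euler_cochain (m_cochain r) sx).
under eq_bigr => i _ do rewrite (multilinear_slotB (m_ml r) sx (ltn_ord i)).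
rewrite sumrB sumr_const card_ord opprB addrA [_ *: _ + _]addrC addrA addrNK.
rewrite -scaler_nat -scalerDl -[X in _ - X]scale1r -scalerBl.
have -> : r%:R + (2 - r%:Z)%:~R - 1 = 1 :> F by ring.
by rewrite scale1r.
Qed.
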